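(* Let $\sigma$ be a realizable multiset. If $\sigma=\sigma_1\cup\dots\cup\sigma_k$ (union of multisets, i.e. $\sigma_1,\dots,\sigma_k$ partition $\sigma$ counting multiplicity), where each $\sigma_i$ is realizable, then $s_1(\sigma_i)\le s_1(\sigma)$ for every $i$.
   Context: A multiset $\sigma=\{\lambda_1,\dots,\lambda_n\}$ of complex numbers is realizable if there exists an $n\times n$ matrix with all entries real and nonnegative whose eigenvalues, counted with algebraic multiplicity, are exactly $\lambda_1,\dots,\lambda_n$. For a multiset $\tau$, $s_1(\tau)$ denotes the sum of its elements counted with multiplicity. *)

From HB Require Import structures.
From mathcomp Require Import all_boot all_order all_algebra.
From mathcomp Require Import complex.
Set Implicit Arguments. Unset Strict Implicit. Unset Printing Implicit Defensive.
Import Order.TTheory GRing.Theory Num.Theory.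
Local Open Scope ring_scope.

(* Complex numbers are R[i] for a real closed field R (e.g. the reals).
   A multiset of complex numbers is a sequence up to permutation. *)

Definition realizable (R : rcfType) (sigma : seq R[i]) : Prop :=
  exists A : 'M[R]_(size sigma),
    (forall i j, 0 <= A i j) /\
    char_poly (map_mx (real_complex R) A) = \prod_(l <- sigma) ('X - l%:P).

Definition s1 (R : rcfType) (tau : seq R[i]) : R[i] := \sum_(l <- tau) l.

From HB Require Import structures.
From mathcomp Require Import all_boot all_order all_algebra.
From mathcomp Require Import complex.
Set Implicit Arguments. Unset Strict Implicit. Unset Printing Implicit Defensive.
Import Order.TTheory GRing.Theory Num.Theory.
Local Open Scope ring_scope.

(* The sum of the eigenvalues of a realizing matrix is its trace, a sum of
   nonnegative entries, so every realizable multiset has s1 >= 0.  As s1 is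
   additive over the parts, s1 sigma exceeds s1 tau by the sum of the
   (nonnegative) s1 of the other parts. *)

Lemma sum_roots_char_poly (F : idomainType) (n : nat) (A : 'M[F]_n)
    (s : seq F) :
  char_poly A = \prod_(l <- s) ('X - l%:P) -> \sum_(l <- s) l = \tr A.
Proof.
move=> charA.
have size_s : size s = n.
  by apply: succn_inj; rewrite -(size_prod_XsubC s id) -charA size_char_poly.
case: s charA size_s => [_ n0 | x s charA size_s].
  by move: A; rewrite -n0 => A; rewrite big_nil /mxtrace big_ord0.
apply: oppr_inj; rewrite -coefPn_prod_XsubC // -charA size_s.
by rewrite char_poly_trace // -size_s.
Qed.

Lemma s1_realizable_ge0 (R : rcfType) (tau : seq R[i]) :
  realizable tau -> 0 <= s1 tau.
Proof.
case=> A [A_ge0 charA].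
rewrite /s1 (sum_roots_char_poly charA) trace_map_mx ler0c.
by apply: sumr_ge0 => i _.
Qed.

Lemma s1_perm (R : rcfType) (sigma tau : seq R[i]) :
  perm_eq sigma tau -> s1 sigma = s1 tau.
Proof. exact: perm_big. Qed.

Lemma s1_flatten (R : rcfType) (parts : seq (seq R[i])) :
  s1 (flatten parts) = \sum_(tau <- parts) s1 tau.
Proof. exact: big_flatten. Qed.

Theorem lemma1 (R : rcfType) (sigma : seq R[i]) (parts : seq (seq R[i])) :
  realizable sigma ->
  perm_eq sigma (flatten parts) ->
  (forall tau, tau \in parts -> realizable tau) ->
  forall tau, tau \in parts -> s1 tau <= s1 sigma.
Proof.
move=> _ sigma_parts parts_realizable tau tau_part.
rewrite (s1_perm sigma_parts) s1_flatten (big_rem tau tau_part) /= lerDl.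
rewrite big_seq; apply: sumr_ge0 => t t_part.
exact/s1_realizable_ge0/parts_realizable/(mem_rem t_part).
Qed.
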